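(* For every $(s,a)\in\mathcal{S}\times\mathcal{A}$, the map $\pi\mapsto d^\pi(s,a)$ is $L$-Lipschitz on $\Pi$ with $L=\frac{|\mathcal{A}|}{(1-\gamma)^2}$, i.e. $|d^{\pi'}(s,a)-d^\pi(s,a)|\le\frac{|\mathcal{A}|}{(1-\gamma)^2}\|\pi'-\pi\|_2$ for all $\pi,\pi'\in\Pi$.
   Context: Finite MDP with finite state space $\mathcal{S}$, finite action space $\mathcal{A}$, transition kernel $P$, discount $\gamma\in[0,1)$, initial distribution $\mu\in\Delta_{\mathcal{S}}$. $\Pi$: stationary randomized policies, viewed as vectors $(\pi(a|s))_{s,a}\in\mathbb{R}^{\mathcal{S}\times\mathcal{A}}$ with Euclidean norm $\|\cdot\|_2$; $P^\pi(s'|s)=\sum_a\pi(a|s)P(s'|s,a)$. Occupancy: $d^\pi=\mu^\top(I-\gamma P^\pi)^{-1}$, $d^\pi(s,a)=d^\pi(s)\pi(a|s)$. *)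

From mathcomp Require Import all_boot all_order all_algebra.
Set Implicit Arguments. Unset Strict Implicit. Unset Printing Implicit Defensive.
Import Order.TTheory GRing.Theory Num.Theory.
Local Open Scope ring_scope.

Section MDP.
Variables (R : rcfType) (nS nA : nat).

(* transition kernel: P s a s' = P(s'|s,a) *)
Definition is_kernel (P : 'I_nS -> 'I_nA -> 'I_nS -> R) : Prop :=
  (forall s a s', 0 <= P s a s') /\ (forall s a, \sum_(s' < nS) P s a s' = 1).

Definition is_distr (mu : 'rV[R]_nS) : Prop :=
  (forall s, 0 <= mu 0 s) /\ \sum_(s < nS) mu 0 s = 1.

(* stationary randomized policy, as a matrix pi s a = pi(a|s) *)
Definition is_policy (pi : 'M[R]_(nS, nA)) : Prop :=
  (forall s a, 0 <= pi s a) /\ (forall s, \sum_(a < nA) pi s a = 1).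

Definition Ppi (P : 'I_nS -> 'I_nA -> 'I_nS -> R) (pi : 'M[R]_(nS, nA))
  : 'M[R]_nS :=
  \matrix_(s, s') \sum_(a < nA) pi s a * P s a s'.

Definition dstate (mu : 'rV[R]_nS) (gamma : R)
  (P : 'I_nS -> 'I_nA -> 'I_nS -> R) (pi : 'M[R]_(nS, nA)) : 'rV[R]_nS :=
  mu *m invmx (1%:M - gamma *: Ppi P pi).

Definition docc (mu : 'rV[R]_nS) (gamma : R)
  (P : 'I_nS -> 'I_nA -> 'I_nS -> R) (pi : 'M[R]_(nS, nA))
  (s : 'I_nS) (a : 'I_nA) : R :=
  dstate mu gamma P pi 0 s * pi s a.

Definition norm2 (M : 'M[R]_(nS, nA)) : R :=
  Num.sqrt (\sum_(s < nS) \sum_(a < nA) M s a ^+ 2).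

End MDP.

(* Write A_pi := I - gamma P^pi. As P^pi is stochastic, x |-> x A_pi is
   bounded below by (1 - gamma) in the l1 norm of row vectors, so A_pi is
   invertible with |y A_pi^-1|_1 <= |y|_1 / (1 - gamma); in particular
   |d^pi|_1 <= 1 / (1 - gamma).  Subtracting d^pi A_pi = mu = d^pi' A_pi'
   gives (d^pi' - d^pi) A_pi = gamma d^pi' P^(pi' - pi), and every row of
   P^(pi' - pi) has l1 mass at most sum_a |pi'(a|s) - pi(a|s)|
   <= |A| |pi' - pi|_2, whence |d^pi' - d^pi|_1 <= gamma |A| |pi' - pi|_2 / (1 - gamma)^2.
   Finally d^pi'(s,a) - d^pi(s,a) = (d^pi' - d^pi)(s) pi'(a|s) + d^pi(s) (pi' - pi)(s,a),
   and the two terms sum to at most (gamma |A| + 1 - gamma) |pi' - pi|_2 / (1 - gamma)^2,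
   which is at most the claim since |A| >= 1. *)
From mathcomp Require Import all_boot all_order all_algebra.
From mathcomp Require Import ring lra.
Set Implicit Arguments. Unset Strict Implicit. Unset Printing Implicit Defensive.
Import Order.TTheory GRing.Theory Num.Theory.
Local Open Scope ring_scope.

Section RowNorm1.
Variables (R : realFieldType) (n : nat).
Implicit Types (x y : 'rV[R]_n) (A M : 'M[R]_n).

Definition norm1 x : R := \sum_(i < n) `|x 0 i|.

Lemma norm1_ge0 x : 0 <= norm1 x.
Proof. exact: sumr_ge0. Qed.

Lemma ler_norm1_entry x i : `|x 0 i| <= norm1 x.
Proof. by rewrite /norm1 (bigD1 i) //= lerDl sumr_ge0. Qed.

Lemma norm1_eq0 x : norm1 x = 0 -> x = 0.
Proof.
move=> x0; apply/rowP => i; rewrite mxE; apply/normr0_eq0/le_anti.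
by rewrite normr_ge0 -x0 ler_norm1_entry.
Qed.

Lemma ler_norm1D x y : norm1 (x + y) <= norm1 x + norm1 y.
Proof. by rewrite /norm1 -big_split ler_sum // => i _; rewrite mxE ler_normD. Qed.

Lemma norm1Z (c : R) x : norm1 (c *: x) = `|c| * norm1 x.
Proof. by rewrite /norm1 mulr_sumr; apply: eq_bigr => i _; rewrite mxE normrM. Qed.

Lemma ler_norm1_mulmx (c : R) M x :
  (forall i, \sum_(j < n) `|M i j| <= c) -> norm1 (x *m M) <= c * norm1 x.
Proof.
move=> rowM; rewrite /norm1.
apply: (@le_trans _ _ (\sum_(j < n) \sum_(i < n) `|x 0 i| * `|M i j|)).
  apply: ler_sum => j _; rewrite mxE; apply: le_trans (ler_norm_sum _ _ _) _.
  by apply: ler_sum => i _; rewrite normrM.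
rewrite exchange_big mulr_sumr; apply: ler_sum => i _.
by rewrite -mulr_sumr mulrC ler_wpM2r.
Qed.

Lemma ler_norm1_resolvent (g : R) M x :
  (forall i, \sum_(j < n) `|M i j| <= 1) -> 0 <= g ->
  (1 - g) * norm1 x <= norm1 (x *m (1%:M - g *: M)).
Proof.
move=> rowM g0.
have xE : x = x *m (1%:M - g *: M) + g *: (x *m M).
  by rewrite mulmxBr mulmx1 -scalemxAr subrK.
have tri : norm1 x <= norm1 (x *m (1%:M - g *: M)) + g * norm1 (x *m M).
  by rewrite {1}xE (le_trans (ler_norm1D _ _)) // norm1Z ger0_norm.
have : g * norm1 (x *m M) <= g * norm1 x.
  by rewrite ler_wpM2l // -[norm1 x]mul1r ler_norm1_mulmx.
lra.
Qed.

Section LowerBound.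
Variables (A : 'M[R]_n) (c : R).
Hypotheses (c_gt0 : 0 < c) (lowA : forall x, c * norm1 x <= norm1 (x *m A)).

Lemma unitmx_norm1_lower : A \in unitmx.
Proof.
rewrite -row_free_unit -kermx_eq0; apply/eqP/row_matrixP => i; rewrite row0.
have kerA : row i (kermx A) *m A = 0 by apply/sub_kermxP; exact: row_sub.
apply: norm1_eq0; apply/le_anti; rewrite norm1_ge0 andbT -(pmulr_rle0 _ c_gt0).
by rewrite (le_trans (lowA _)) // kerA /norm1 big1 // => j _; rewrite mxE normr0.
Qed.

Lemma ler_norm1_invmx y : norm1 (y *m invmx A) <= norm1 y / c.
Proof.
by rewrite ler_pdivlMr // mulrC (le_trans (lowA _)) // mulmxKV ?unitmx_norm1_lower.
Qed.

End LowerBound.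
End RowNorm1.

Section Norm2.
Variables (R : rcfType) (m n : nat).
Implicit Types M : 'M[R]_(m, n).

Lemma norm2_ge0 M : 0 <= norm2 M.
Proof. exact: sqrtr_ge0. Qed.

Lemma ler_entry_norm2 M i j : `|M i j| <= norm2 M.
Proof.
have sq0 (k : 'I_m) (X : pred 'I_n) : 0 <= \sum_(l | X l) M k l ^+ 2.
  by rewrite sumr_ge0 // => l _; rewrite sqr_ge0.
rewrite /norm2 -sqrtr_sqr ler_sqrt; last by rewrite sumr_ge0.
rewrite (bigD1 i) //= (bigD1 j) //= -addrA lerDl addr_ge0 //.
by rewrite sumr_ge0.
Qed.

Lemma ler_row_norm1_norm2 M i : \sum_(j < n) `|M i j| <= n%:R * norm2 M.
Proof.
apply: le_trans (ler_sum _ (fun j _ => ler_entry_norm2 M i j)) _.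
by rewrite sumr_const card_ord mulr_natl.
Qed.

End Norm2.

Section Policy.
Variables (R : rcfType) (nS nA : nat) (pi : 'M[R]_(nS, nA)).
Hypothesis pol : is_policy pi.

Lemma row_norm1_policy i : \sum_(b < nA) `|pi i b| = 1.
Proof.
have [pi_ge0 pi_sum1] := pol.
by rewrite -(pi_sum1 i); apply: eq_bigr => b _; rewrite ger0_norm.
Qed.

Lemma ler_policy_entry1 i b : `|pi i b| <= 1.
Proof. by rewrite -(row_norm1_policy i) (bigD1 b) //= lerDl sumr_ge0. Qed.

End Policy.

Section Occupancy.
Variables (R : rcfType) (nS nA : nat) (P : 'I_nS -> 'I_nA -> 'I_nS -> R).
Hypothesis kerP : is_kernel P.

Lemma PpiB (pi pi' : 'M[R]_(nS, nA)) : Ppi P (pi' - pi) = Ppi P pi' - Ppi P pi.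
Proof.
by apply/matrixP => i j; rewrite !mxE -sumrB; apply: eq_bigr => b _; rewrite !mxE mulrBl.
Qed.

Lemma ler_row_norm1_Ppi (D : 'M[R]_(nS, nA)) i :
  \sum_(j < nS) `|Ppi P D i j| <= \sum_(b < nA) `|D i b|.
Proof.
have [P_ge0 P_sum1] := kerP.
apply: (@le_trans _ _ (\sum_(j < nS) \sum_(b < nA) `|D i b| * P i b j)).
  apply: ler_sum => j _; rewrite mxE; apply: le_trans (ler_norm_sum _ _ _) _.
  by apply: ler_sum => b _; rewrite normrM (ger0_norm (P_ge0 _ _ _)).
by rewrite exchange_big; under eq_bigr => b _ do rewrite -mulr_sumr P_sum1 mulr1.
Qed.

Variables (mu : 'rV[R]_nS) (gamma : R).
Hypotheses (mu_distr : is_distr mu) (gamma_ge0 : 0 <= gamma) (gamma_lt1 : gamma < 1).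

Let gamma_gt0 : 0 < 1 - gamma. Proof. by rewrite subr_gt0. Qed.

Lemma ler_norm1_occupancy_op (pi : 'M[R]_(nS, nA)) x : is_policy pi ->
  (1 - gamma) * norm1 x <= norm1 (x *m (1%:M - gamma *: Ppi P pi)).
Proof.
move=> pol; apply: ler_norm1_resolvent => // i.
by rewrite (le_trans (ler_row_norm1_Ppi _ _)) // row_norm1_policy.
Qed.

Lemma unitmx_occupancy_op (pi : 'M[R]_(nS, nA)) : is_policy pi ->
  1%:M - gamma *: Ppi P pi \in unitmx.
Proof.
by move=> pol; apply: (unitmx_norm1_lower gamma_gt0) => x; exact: ler_norm1_occupancy_op.
Qed.

Lemma dstateK (pi : 'M[R]_(nS, nA)) : is_policy pi ->
  dstate mu gamma P pi *m (1%:M - gamma *: Ppi P pi) = mu.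
Proof. by move=> pol; rewrite mulmxKV ?unitmx_occupancy_op. Qed.

Lemma ler_norm1_mulmx_occupancy_inv (pi : 'M[R]_(nS, nA)) y : is_policy pi ->
  norm1 (y *m invmx (1%:M - gamma *: Ppi P pi)) <= norm1 y / (1 - gamma).
Proof.
by move=> pol; apply: (ler_norm1_invmx gamma_gt0) => x; exact: ler_norm1_occupancy_op.
Qed.

Lemma norm1_dstate (pi : 'M[R]_(nS, nA)) : is_policy pi ->
  norm1 (dstate mu gamma P pi) <= (1 - gamma)^-1.
Proof.
move=> pol; apply: le_trans (ler_norm1_mulmx_occupancy_inv mu pol) _.
have [mu_ge0 mu_sum1] := mu_distr.
suff -> : norm1 mu = 1 by rewrite mul1r.
by rewrite -mu_sum1; apply: eq_bigr => i _; rewrite ger0_norm.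
Qed.

Lemma dstateB_mulmx (pi pi' : 'M[R]_(nS, nA)) : is_policy pi -> is_policy pi' ->
  (dstate mu gamma P pi' - dstate mu gamma P pi) *m (1%:M - gamma *: Ppi P pi)
  = gamma *: (dstate mu gamma P pi' *m Ppi P (pi' - pi)).
Proof.
move=> pol pol'; rewrite mulmxBl dstateK // -{2}(dstateK pol') -mulmxBr.
by rewrite scalemxAr PpiB; congr (_ *m _); rewrite scalerBr opprB addrC addrA subrK addrC.
Qed.

Lemma ler_norm1_dstateB (pi pi' : 'M[R]_(nS, nA)) (c : R) :
  is_policy pi -> is_policy pi' -> 0 <= c ->
  (forall i, \sum_(b < nA) `|(pi' - pi) i b| <= c) ->
  norm1 (dstate mu gamma P pi' - dstate mu gamma P pi) <= gamma * c / (1 - gamma) ^+ 2.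
Proof.
move=> pol pol' c_ge0 rowD.
rewrite -[_ - _](mulmxK (unitmx_occupancy_op pol)) dstateB_mulmx //.
apply: le_trans (ler_norm1_mulmx_occupancy_inv _ pol) _.
rewrite norm1Z ger0_norm // expr2 invfM mulrA.
apply: ler_wpM2r; first by rewrite invr_ge0 ltW.
rewrite -mulrA; apply: ler_wpM2l => //.
apply: le_trans (ler_norm1_mulmx (c := c) _ _) _; last by rewrite ler_wpM2l ?norm1_dstate.
by move=> i; rewrite (le_trans (ler_row_norm1_Ppi _ _)).
Qed.

Lemma doccB (pi pi' : 'M[R]_(nS, nA)) s a :
  docc mu gamma P pi' s a - docc mu gamma P pi s a
  = (dstate mu gamma P pi' - dstate mu gamma P pi) 0 s * pi' s a
    + dstate mu gamma P pi 0 s * (pi' - pi) s a.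
Proof. by rewrite /docc !mxE; ring. Qed.

Lemma ler_norm_doccB (pi pi' : 'M[R]_(nS, nA)) (c : R) s a :
  is_policy pi -> is_policy pi' -> 0 <= c ->
  (forall i, \sum_(b < nA) `|(pi' - pi) i b| <= c) ->
  `|docc mu gamma P pi' s a - docc mu gamma P pi s a|
    <= gamma * c / (1 - gamma) ^+ 2 + `|(pi' - pi) s a| / (1 - gamma).
Proof.
move=> pol pol' c_ge0 rowD; rewrite doccB (le_trans (ler_normD _ _)) // !normrM.
apply: lerD; last first.
  by rewrite mulrC ler_wpM2l // (le_trans (ler_norm1_entry _ s)) ?norm1_dstate.
rewrite -[X in _ <= X]mulr1 ler_pM ?ler_policy_entry1 //.
exact: le_trans (ler_norm1_entry _ s) (ler_norm1_dstateB pol pol' c_ge0 rowD).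
Qed.

End Occupancy.

Theorem proposition4 (R : rcfType) (nS nA : nat)
  (P : 'I_nS -> 'I_nA -> 'I_nS -> R) (mu : 'rV[R]_nS) (gamma : R) :
  is_kernel P -> is_distr mu -> 0 <= gamma -> gamma < 1 ->
  forall (s : 'I_nS) (a : 'I_nA) (pi pi' : 'M[R]_(nS, nA)),
    is_policy pi -> is_policy pi' ->
    `|docc mu gamma P pi' s a - docc mu gamma P pi s a|
      <= nA%:R / (1 - gamma) ^+ 2 * norm2 (pi' - pi).
Proof.
move=> kerP mu_distr gamma_ge0 gamma_lt1 s a pi pi' pol pol'.
set N := norm2 (pi' - pi).
have gamma_gt0 : 0 < 1 - gamma by rewrite subr_gt0.
have nA_ge1 : 1 <= nA%:R :> R by rewrite ler1n (leq_ltn_trans _ (ltn_ord a)).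
apply: le_trans (ler_norm_doccB kerP mu_distr gamma_ge0 gamma_lt1 s a pol pol'
  (mulr_ge0 (ler0n _ _) (norm2_ge0 _)) (ler_row_norm1_norm2 (pi' - pi))) _.
apply: le_trans (lerD (lexx _) (ler_wpM2r _ (ler_entry_norm2 _ s a))) _.
  by rewrite invr_ge0 ltW.
rewrite -subr_ge0.
have -> : nA%:R / (1 - gamma) ^+ 2 * N - (gamma * (nA%:R * N) / (1 - gamma) ^+ 2
    + N / (1 - gamma)) = (nA%:R - 1) * N / (1 - gamma).
  by field; rewrite lt0r_neq0.
by rewrite divr_ge0 ?(ltW gamma_gt0) // mulr_ge0 ?norm2_ge0 // subr_ge0.
Qed.
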